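(* Let $0<e<\Lambda$, $\phi_h>0$, $f:[0,\phi_h]\to(0,1]$ strictly concave, strictly decreasing, differentiable with $f(0)=1$. Consider the two-player game with action sets $[0,\phi_h]$ and payoffs $\tilde{\mathcal M}_i(\phi_i,\phi_{-i})$ given by: - if $\phi_i=\phi_{-i}$: $e\phi_i$ if $\phi_i<\underline\phi$, and $\frac{\Lambda}{2}f(\phi_i)\phi_i$ if $\phi_i\ge\underline\phi$; - if $\phi_i<\phi_{-i}$: $e\phi_i$ if $\phi_{-i}<\bar\phi$, and $\min\{\Lambda f(\phi_i),e\}\phi_i$ if $\phi_{-i}\ge\bar\phi$; - if $\phi_i>\phi_{-i}$: $e\phi_i$ if $\phi_i<\underline\phi$, $m(\phi_i)$ if $\phi_i\in[\underline\phi,\bar\phi)$, and $0$ if $\phi_i\ge\bar\phi$. Let $\phi^*_m$ be the unique maximizer of $m(\phi)=(\Lambda f(\phi)-e)\phi$ over $[0,\phi_h]$. If $\phi^*_m\le\underline\phi\le\phi_h$, then $(\underline\phi,\underline\phi)$ is a Nash equilibrium.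
   Context: These payoffs are the limiting (driver abandonment rate $\beta\to0$) long-run revenue rates of two symmetric ride-hailing platforms using static prices, when passengers (total Poisson rate $\Lambda$) split across platforms by a Wardrop equilibrium equalizing the probability of not obtaining a ride (either no available driver or rejection of the quoted price); $e$ is the effective driver arrival rate per platform and $f(\phi)$ the probability a passenger accepts price $\phi$. Thresholds: $\underline{\phi}:=\inf\{\phi\in[0,\phi_h]: f(\phi)\le 2e/\Lambda\}$, $\bar\phi:=\inf\{\phi\in[0,\phi_h]: f(\phi)\le e/\Lambda\}$, with $\inf\emptyset=+\infty$ (so $\underline\phi=f^{-1}(2e/\Lambda)$, $\bar\phi=f^{-1}(e/\Lambda)$ when in range, and $0$ when $2e/\Lambda>1$, resp. $e/\Lambda>1$). A Nash equilibrium is a profile from which no player can strictly increase its payoff by unilateral deviation. *)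

From Stdlib Require Import Reals.
From Coquelicot Require Import Coquelicot.
Open Scope R_scope.

Definition in_act (phi_h x : R) : Prop := 0 <= x <= phi_h.

Definition differentiable_on_interval (f : R -> R) (a b : R) : Prop :=
  forall x, a <= x <= b -> exists l : R, forall eps : R, 0 < eps ->
    exists delta : R, 0 < delta /\
      forall y, a <= y <= b -> y <> x -> Rabs (y - x) < delta ->
        Rabs ((f y - f x) / (y - x) - l) < eps.

Definition strictly_concave_on (f : R -> R) (a b : R) : Prop :=
  forall x y t, a <= x <= b -> a <= y <= b -> x <> y -> 0 < t < 1 ->
    t * f x + (1 - t) * f y < f (t * x + (1 - t) * y).

Definition strictly_decreasing_on (f : R -> R) (a b : R) : Prop :=
  forall x y, a <= x <= b -> a <= y <= b -> x < y -> f y < f x.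

(* inf { phi in [0, phi_h] : f phi <= c }, with inf of empty = +oo *)
Definition threshold (f : R -> R) (phi_h c : R) : Rbar :=
  Glb_Rbar (fun phi => 0 <= phi <= phi_h /\ f phi <= c).

Definition phi_lo (f : R -> R) (Lambda e phi_h : R) : Rbar :=
  threshold f phi_h (2 * e / Lambda).
Definition phi_bar (f : R -> R) (Lambda e phi_h : R) : Rbar :=
  threshold f phi_h (e / Lambda).

Definition mfun (f : R -> R) (Lambda e phi : R) : R := (Lambda * f phi - e) * phi.

Definition payoff (f : R -> R) (Lambda e phi_h phi_i phi_o : R) : R :=
  let plo := phi_lo f Lambda e phi_h in
  let pbar := phi_bar f Lambda e phi_h in
  match total_order_T phi_i phi_o with
  | inleft (right _) (* phi_i = phi_o *) =>
      if Rbar_lt_dec (Finite phi_i) plo then e * phi_i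
      else Lambda / 2 * f phi_i * phi_i
  | inleft (left _) (* phi_i < phi_o *) =>
      if Rbar_lt_dec (Finite phi_o) pbar then e * phi_i
      else Rmin (Lambda * f phi_i) e * phi_i
  | inright _ (* phi_i > phi_o *) =>
      if Rbar_lt_dec (Finite phi_i) plo then e * phi_i
      else if Rbar_lt_dec (Finite phi_i) pbar then mfun f Lambda e phi_i
      else 0
  end.

Definition is_nash (M : R -> R -> R) (phi_h a b : R) : Prop :=
  in_act phi_h a /\ in_act phi_h b /\
  (forall a', in_act phi_h a' -> M a' b <= M a b) /\
  (forall b', in_act phi_h b' -> M b' a <= M b a).

(* Proof: by continuity of f, the threshold [plo] is either 0 or satisfies
   [f plo = 2 e / Lambda]; either way the symmetric payoff at [plo] equals both
   [e * plo] and [m plo]. Undercutting yields at most [e * phi] with a smaller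
   [phi]. Overcutting yields [m phi] or 0, and [m] is concave (on [phi >= 0] a
   concave nonincreasing [f] makes [phi * f phi] concave), so it is
   nonincreasing to the right of its maximizer [phi_m <= plo]. *)
From Stdlib Require Import Reals.
From Coquelicot Require Import Coquelicot.
From Stdlib Require Import Lra.
Open Scope R_scope.

Definition continuous_on_interval (f : R -> R) (a b : R) : Prop :=
  forall x, a <= x <= b -> forall eps, 0 < eps ->
    exists d, 0 < d /\
      forall y, a <= y <= b -> Rabs (y - x) < d -> Rabs (f y - f x) < eps.

Definition concave_on (f : R -> R) (a b : R) : Prop :=
  forall x y t, a <= x <= b -> a <= y <= b -> x <> y -> 0 < t < 1 ->
    t * f x + (1 - t) * f y <= f (t * x + (1 - t) * y).

Lemma differentiable_on_interval_continuous (f : R -> R) (a b : R) :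
  differentiable_on_interval f a b -> continuous_on_interval f a b.
Proof.
  intros Hdiff x Hx eps Heps.
  destruct (Hdiff x Hx) as [l Hl].
  destruct (Hl 1 Rlt_0_1) as [d [Hd Hquot]].
  pose proof (Rabs_pos l) as Hl0.
  exists (Rmin d (eps / (Rabs l + 1))); split.
  { apply Rmin_pos; [lra | apply Rdiv_lt_0_compat; lra]. }
  intros y Hy Hyx.
  destruct (Req_dec y x) as [-> | Hneq].
  { unfold Rminus; rewrite Rplus_opp_r, Rabs_R0; lra. }
  pose proof (Rmin_l d (eps / (Rabs l + 1))) as Hmin_d.
  pose proof (Rmin_r d (eps / (Rabs l + 1))) as Hmin_eps.
  assert (Hyd : Rabs (y - x) < d) by lra.
  specialize (Hquot y Hy Hneq Hyd).
  set (q := (f y - f x) / (y - x)) in Hquot.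
  assert (Hq_bound : Rabs q < Rabs l + 1).
  { pose proof (Rabs_triang (q - l) l) as Htri.
    replace (q - l + l) with q in Htri by ring.
    lra. }
  replace (f y - f x) with (q * (y - x)) by (unfold q; field; lra).
  rewrite Rabs_mult.
  assert (Hscale : eps / (Rabs l + 1) * (Rabs l + 1) = eps) by (field; lra).
  pose proof (Rabs_pos q); pose proof (Rabs_pos (y - x)).
  nra.
Qed.

Lemma threshold_spec (f : R -> R) (b c p : R) :
  threshold f b c = Finite p ->
  (forall x, 0 <= x <= b -> f x <= c -> p <= x) /\
  (forall y, (forall x, 0 <= x <= b -> f x <= c -> y <= x) -> y <= p).
Proof.
  intros Hp.
  destruct (Glb_Rbar_correct (fun phi => 0 <= phi <= b /\ f phi <= c))
    as [Hlb Hgreatest].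
  unfold threshold in Hp; rewrite Hp in Hlb, Hgreatest.
  split.
  - intros x Hx Hfx; exact (Hlb x (conj Hx Hfx)).
  - intros y Hy; apply (Hgreatest (Finite y)).
    intros x [Hx Hfx]; exact (Hy x Hx Hfx).
Qed.

Lemma threshold_bounds (f : R -> R) (b c p : R) :
  threshold f b c = Finite p -> 0 <= p <= b.
Proof.
  intros Hp; destruct (threshold_spec f b c p Hp) as [Hlb Hgreatest].
  split.
  - apply Hgreatest; intros x Hx _; lra.
  - destruct (Rle_dec p b) as [Hpb | Hpb]; [exact Hpb |].
    (* a threshold beyond [b] means the set is empty, so [p + 1] bounds it too *)
    assert (Hempty : p + 1 <= p).
    { apply Hgreatest; intros x Hx Hfx.
      pose proof (Hlb x Hx Hfx); lra. }
    lra.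
Qed.

Lemma threshold_value_le (f : R -> R) (b c p : R) :
  continuous_on_interval f 0 b -> threshold f b c = Finite p -> f p <= c.
Proof.
  intros Hcont Hp.
  pose proof (threshold_bounds f b c p Hp) as Hpb.
  destruct (threshold_spec f b c p Hp) as [Hlb Hgreatest].
  destruct (Rle_dec (f p) c) as [Hle | Hgt]; [exact Hle | exfalso].
  destruct (Hcont p Hpb (f p - c)) as [d [Hd Hnear]]; [lra |].
  assert (Hshift : p + d / 2 <= p).
  { apply Hgreatest; intros x Hx Hfx.
    pose proof (Hlb x Hx Hfx).
    destruct (Rle_dec (p + d / 2) x) as [Hle | Hclose]; [exact Hle | exfalso].
    assert (Hdist : Rabs (x - p) < d) by (rewrite Rabs_right; lra).
    pose proof (Hnear x Hx Hdist) as Hfx_near.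
    apply Rabs_lt_between in Hfx_near; lra. }
  lra.
Qed.

Lemma threshold_value_ge (f : R -> R) (b c p : R) :
  continuous_on_interval f 0 b -> threshold f b c = Finite p -> 0 < p -> c <= f p.
Proof.
  intros Hcont Hp Hp0.
  pose proof (threshold_bounds f b c p Hp) as Hpb.
  destruct (threshold_spec f b c p Hp) as [Hlb _].
  destruct (Rle_dec c (f p)) as [Hle | Hlt]; [exact Hle | exfalso].
  destruct (Hcont p Hpb (c - f p)) as [d [Hd Hnear]]; [lra |].
  set (y := p - Rmin (d / 2) p).
  pose proof (Rmin_l (d / 2) p); pose proof (Rmin_r (d / 2) p).
  assert (Hstep : 0 < Rmin (d / 2) p) by (apply Rmin_pos; lra).
  assert (Hy : 0 <= y <= b) by (unfold y; lra).
  assert (Hdist : Rabs (y - p) < d) by (rewrite Rabs_left; unfold y; lra).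
  pose proof (Hnear y Hy Hdist) as Hfy_near.
  apply Rabs_lt_between in Hfy_near.
  pose proof (Hlb y Hy ltac:(lra)); unfold y in *; lra.
Qed.

Lemma phi_lo_revenue (f : R -> R) (Lambda e b p : R) :
  0 < Lambda -> continuous_on_interval f 0 b ->
  phi_lo f Lambda e b = Finite p -> Lambda / 2 * f p * p = e * p.
Proof.
  intros HL Hcont Hp.
  pose proof (threshold_bounds f b _ p Hp) as Hpb.
  destruct (Req_dec p 0) as [-> | Hp0]; [ring |].
  assert (Hfp : f p = 2 * e / Lambda).
  { apply Rle_antisym.
    - exact (threshold_value_le f b _ p Hcont Hp).
    - apply (threshold_value_ge f b _ p Hcont Hp); lra. }
  rewrite Hfp; field; lra.
Qed.

Lemma strictly_concave_on_concave_on (f : R -> R) (a b : R) :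
  strictly_concave_on f a b -> concave_on f a b.
Proof.
  intros Hconc x y t Hx Hy Hxy Ht; left; exact (Hconc x y t Hx Hy Hxy Ht).
Qed.

Lemma concave_on_mul_id (f : R -> R) (a b : R) :
  0 <= a -> concave_on f a b ->
  (forall x y, a <= x <= b -> a <= y <= b -> x < y -> f y <= f x) ->
  concave_on (fun x => f x * x) a b.
Proof.
  intros Ha Hconc Hdec x y t Hx Hy Hxy Ht.
  set (z := t * x + (1 - t) * y).
  assert (Hchord : (t * f x + (1 - t) * f y) * z <= f z * z).
  { apply Rmult_le_compat_r; [unfold z; nra | exact (Hconc x y t Hx Hy Hxy Ht)]. }
  assert (Hgap : 0 <= t * (1 - t) * (f x - f y) * (y - x)).
  { assert (Hmono : 0 <= (f x - f y) * (y - x)).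
    { destruct (Rlt_or_le x y) as [Hlt | Hge].
      - pose proof (Hdec x y Hx Hy Hlt); nra.
      - assert (Hlt : y < x) by lra.
        pose proof (Hdec y x Hy Hx Hlt); nra. }
    replace (t * (1 - t) * (f x - f y) * (y - x))
      with (t * (1 - t) * ((f x - f y) * (y - x))) by ring.
    apply Rmult_le_pos; [nra | exact Hmono]. }
  assert (Hident : (t * f x + (1 - t) * f y) * z - (t * (f x * x) + (1 - t) * (f y * y))
                   = t * (1 - t) * (f x - f y) * (y - x)) by (unfold z; ring).
  lra.
Qed.

Lemma concave_on_mfun (f : R -> R) (Lambda e b : R) :
  0 <= Lambda -> concave_on f 0 b ->
  (forall x y, 0 <= x <= b -> 0 <= y <= b -> x < y -> f y <= f x) ->
  concave_on (mfun f Lambda e) 0 b.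
Proof.
  intros HL Hconc Hdec x y t Hx Hy Hxy Ht.
  pose proof (concave_on_mul_id f 0 b (Rle_refl 0) Hconc Hdec x y t Hx Hy Hxy Ht) as Hfx.
  unfold mfun; simpl in Hfx.
  set (z := t * x + (1 - t) * y) in *.
  replace ((Lambda * f z - e) * z) with (Lambda * (f z * z) - e * z) by ring.
  replace (t * ((Lambda * f x - e) * x) + (1 - t) * ((Lambda * f y - e) * y))
    with (Lambda * (t * (f x * x) + (1 - t) * (f y * y)) - e * z) by (unfold z; ring).
  apply Rplus_le_compat_r, Rmult_le_compat_l; assumption.
Qed.

Lemma concave_on_nonincreasing_right_of_max (g : R -> R) (a b xm : R) :
  concave_on g a b -> a <= xm <= b ->
  (forall x, a <= x <= b -> g x <= g xm) ->
  forall x y, xm <= x -> x < y <= b -> g y <= g x.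
Proof.
  intros Hconc Hxm Hmax x y Hx Hxy.
  destruct (Req_dec x xm) as [-> | Hneq]; [apply Hmax; lra |].
  set (t := (y - x) / (y - xm)).
  assert (Ht : 0 < t < 1).
  { unfold t; split; [apply Rdiv_lt_0_compat; lra |].
    apply (Rmult_lt_reg_r (y - xm)); [lra |]; field_simplify; lra. }
  assert (Hx_comb : t * xm + (1 - t) * y = x) by (unfold t; field; lra).
  pose proof (Hconc xm y t Hxm ltac:(lra) ltac:(lra) Ht) as Hchord.
  rewrite Hx_comb in Hchord.
  pose proof (Hmax y ltac:(lra)).
  nra.
Qed.

Lemma payoff_undercut_le (f : R -> R) (Lambda e phi_h phi_i phi_o : R) :
  0 <= phi_i -> phi_i < phi_o -> payoff f Lambda e phi_h phi_i phi_o <= e * phi_i.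
Proof.
  intros Hi Hio; unfold payoff; cbv zeta.
  destruct (total_order_T phi_i phi_o) as [[_ | Heq] | Hgt]; try lra.
  destruct (Rbar_lt_dec _ _); [lra |].
  pose proof (Rmin_r (Lambda * f phi_i) e); nra.
Qed.

Lemma payoff_diag (f : R -> R) (Lambda e phi_h p phi : R) :
  phi_lo f Lambda e phi_h = Finite p -> p <= phi ->
  payoff f Lambda e phi_h phi phi = Lambda / 2 * f phi * phi.
Proof.
  intros Hp Hphi; unfold payoff; cbv zeta; rewrite Hp.
  destruct (total_order_T phi phi) as [[Hlt | _] | Hgt]; try lra.
  destruct (Rbar_lt_dec (Finite phi) (Finite p)) as [Hlt | _]; [simpl in Hlt; lra |].
  reflexivity.
Qed.

Lemma payoff_overcut_le (f : R -> R) (Lambda e phi_h p phi_i phi_o : R) :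
  phi_lo f Lambda e phi_h = Finite p -> p <= phi_i -> phi_o < phi_i ->
  payoff f Lambda e phi_h phi_i phi_o <= Rmax (mfun f Lambda e phi_i) 0.
Proof.
  intros Hp Hpi Hoi; unfold payoff; cbv zeta; rewrite Hp.
  destruct (total_order_T phi_i phi_o) as [[Hlt | Heq] | _]; try lra.
  destruct (Rbar_lt_dec (Finite phi_i) (Finite p)) as [Hlt | _]; [simpl in Hlt; lra |].
  destruct (Rbar_lt_dec _ _); [apply Rmax_l | apply Rmax_r].
Qed.

Theorem theorem4 (Lambda e phi_h : R) (f : R -> R)
  (He : 0 < e) (HeL : e < Lambda) (Hph : 0 < phi_h)
  (Hrange : forall x, 0 <= x <= phi_h -> 0 < f x <= 1)
  (Hconc : strictly_concave_on f 0 phi_h)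
  (Hdec : strictly_decreasing_on f 0 phi_h)
  (Hdiff : differentiable_on_interval f 0 phi_h)
  (Hf0 : f 0 = 1)
  (phi_m : R)
  (Hmax : 0 <= phi_m <= phi_h /\
          forall x, 0 <= x <= phi_h -> mfun f Lambda e x <= mfun f Lambda e phi_m)
  (Huniq : forall y, 0 <= y <= phi_h ->
          (forall x, 0 <= x <= phi_h -> mfun f Lambda e x <= mfun f Lambda e y) ->
          y = phi_m)
  (plo : R) (Hplo : phi_lo f Lambda e phi_h = Finite plo)
  (Hcond : phi_m <= plo <= phi_h) :
  is_nash (payoff f Lambda e phi_h) phi_h plo plo.
Proof.
  destruct Hmax as [Hm Hmax].
  pose proof (phi_lo_revenue f Lambda e phi_h plo ltac:(lra)
                (differentiable_on_interval_continuous f 0 phi_h Hdiff) Hplo) as Hrev.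
  assert (Hm_plo : mfun f Lambda e plo = e * plo) by (unfold mfun; lra).
  assert (Hm_right : forall a, plo < a <= phi_h ->
                       mfun f Lambda e a <= mfun f Lambda e plo).
  { intros a Ha.
    refine (concave_on_nonincreasing_right_of_max _ 0 phi_h phi_m
              (concave_on_mfun f Lambda e phi_h ltac:(lra)
                 (strictly_concave_on_concave_on f 0 phi_h Hconc) _)
              Hm Hmax plo a ltac:(lra) Ha).
    intros x y Hx Hy Hxy; exact (Rlt_le _ _ (Hdec x y Hx Hy Hxy)). }
  assert (Hbest : forall a, in_act phi_h a ->
            payoff f Lambda e phi_h a plo <= payoff f Lambda e phi_h plo plo).
  { intros a Ha; unfold in_act in Ha.
    rewrite (payoff_diag f Lambda e phi_h plo plo Hplo (Rle_refl plo)), Hrev.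
    destruct (Rtotal_order a plo) as [Hlt | [-> | Hgt]].
    - pose proof (payoff_undercut_le f Lambda e phi_h a plo (proj1 Ha) Hlt); nra.
    - rewrite (payoff_diag f Lambda e phi_h plo plo Hplo (Rle_refl plo)); lra.
    - pose proof (payoff_overcut_le f Lambda e phi_h plo a plo Hplo ltac:(lra) Hgt).
      pose proof (Hm_right a ltac:(lra)).
      unfold Rmax in *; destruct (Rle_dec _ _); nra. }
  unfold is_nash, in_act; repeat split; try lra; apply Hbest.
Qed.
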